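(* Let $X,Y$ be real Banach spaces such that $X^*$ and $Y$ have octahedral norm. Let $H$ be a closed subspace of $L(X,Y)$ such that $X^*\otimes Y\subseteq H$. Then $H$ has octahedral norm.
   Context: The norm of a Banach space $Z$ is octahedral if for every finite-dimensional subspace $E$ of $Z$ and every $\varepsilon>0$ there is $y\in S_Z$ with $\|x+\lambda y\|\ge(1-\varepsilon)(\|x\|+|\lambda|)$ for all $x\in E$ and scalars $\lambda$. $L(X,Y)$ is the space of bounded linear operators with operator norm; $X^*\otimes Y$ is the space of finite-rank operators spanned by $x\mapsto x^*(x)y$. *)

From Stdlib Require Import Reals List Classical ClassicalEpsilon.
Open Scope R_scope.

Record Banach := {
  bcar :> Type;
  bzero : bcar;
  badd : bcar -> bcar -> bcar;
  bopp : bcar -> bcar;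
  bscal : R -> bcar -> bcar;
  bnorm : bcar -> R;
  badd_assoc : forall x y z, badd x (badd y z) = badd (badd x y) z;
  badd_comm : forall x y, badd x y = badd y x;
  badd_0 : forall x, badd x bzero = x;
  badd_opp : forall x, badd x (bopp x) = bzero;
  bscal_addr : forall a x y, bscal a (badd x y) = badd (bscal a x) (bscal a y);
  bscal_addl : forall a b x, bscal (a + b) x = badd (bscal a x) (bscal b x);
  bscal_mul : forall a b x, bscal a (bscal b x) = bscal (a * b) x;
  bscal_1 : forall x, bscal 1 x = x;
  bnorm_eq0 : forall x, bnorm x = 0 -> x = bzero;
  bnorm_triangle : forall x y, bnorm (badd x y) <= bnorm x + bnorm y;
  bnorm_scal : forall a x, bnorm (bscal a x) = Rabs a * bnorm x;
  bcomplete : forall u : nat -> bcar,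
    (forall eps, 0 < eps -> exists N, forall n m, (n >= N)%nat -> (m >= N)%nat ->
        bnorm (badd (u n) (bopp (u m))) < eps) ->
    exists l, Un_cv (fun n => bnorm (badd (u n) (bopp l))) 0
}.

(** Supremum of a set of reals (meaningful when it exists). *)
Definition Rsup (E : R -> Prop) : R := epsilon (inhabits 0) (is_lub E).

Definition is_blfun (X : Banach) (f : X -> R) : Prop :=
  (forall x y, f (badd X x y) = f x + f y) /\
  (forall a x, f (bscal X a x) = a * f x) /\
  (exists M, forall x, Rabs (f x) <= M * bnorm X x).

Definition is_blop (X Y : Banach) (T : X -> Y) : Prop :=
  (forall x y, T (badd X x y) = badd Y (T x) (T y)) /\
  (forall a x, T (bscal X a x) = bscal Y a (T x)) /\
  (exists M, forall x, bnorm Y (T x) <= M * bnorm X x).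

Definition dualnorm (X : Banach) (f : X -> R) : R :=
  Rsup (fun t => exists x, bnorm X x <= 1 /\ t = Rabs (f x)).

Definition opnorm (X Y : Banach) (T : X -> Y) : R :=
  Rsup (fun t => exists x, bnorm X x <= 1 /\ t = bnorm Y (T x)).

Fixpoint lincomb {V : Type} (zero : V) (add : V -> V -> V) (scal : R -> V -> V)
  (cs : list R) (es : list V) : V :=
  match cs, es with
  | c :: cs', e :: es' => add (scal c e) (lincomb zero add scal cs' es')
  | _, _ => zero
  end.

Definition in_span {V : Type} (zero : V) (add : V -> V -> V) (scal : R -> V -> V)
  (es : list V) (x : V) : Prop :=
  exists cs, length cs = length es /\ x = lincomb zero add scal cs es.

(** Octahedrality of the normed space Z = {v : V | P v} with the given operations:
    every finite-dimensional subspace E (= span of finitely many elements of Z)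
    and eps > 0 admit y in S_Z with ||x + lam y|| >= (1-eps)(||x|| + |lam|). *)
Definition octahedral_on {V : Type} (P : V -> Prop) (zero : V)
  (add : V -> V -> V) (scal : R -> V -> V) (nrm : V -> R) : Prop :=
  forall es : list V, Forall P es ->
  forall eps, 0 < eps ->
  exists y, P y /\ nrm y = 1 /\
    forall x lam, in_span zero add scal es x ->
      nrm (add x (scal lam y)) >= (1 - eps) * (nrm x + Rabs lam).

Definition octahedral (Z : Banach) : Prop :=
  octahedral_on (fun _ : Z => True) (bzero Z) (badd Z) (bscal Z) (bnorm Z).

Definition dual_octahedral (X : Banach) : Prop :=
  octahedral_on (is_blfun X) (fun _ => 0)
    (fun f g x => f x + g x) (fun a f x => a * f x) (dualnorm X).

Definition op_zero (X Y : Banach) : X -> Y := fun _ => bzero Y.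
Definition op_add (X Y : Banach) (S T : X -> Y) : X -> Y := fun x => badd Y (S x) (T x).
Definition op_scal (X Y : Banach) (a : R) (T : X -> Y) : X -> Y := fun x => bscal Y a (T x).
Definition op_opp (X Y : Banach) (T : X -> Y) : X -> Y := fun x => bopp Y (T x).

Definition closed_subspace_L (X Y : Banach) (H : (X -> Y) -> Prop) : Prop :=
  (forall T, H T -> is_blop X Y T) /\
  H (op_zero X Y) /\
  (forall S T, H S -> H T -> H (op_add X Y S T)) /\
  (forall a T, H T -> H (op_scal X Y a T)) /\
  (forall (Tn : nat -> X -> Y) (T : X -> Y),
     (forall n, H (Tn n)) -> is_blop X Y T ->
     Un_cv (fun n => opnorm X Y (op_add X Y (Tn n) (op_opp X Y T))) 0 -> H T).

(** X^* (x) Y ⊆ H: every rank-one operator x |-> f(x) y lies in H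
    (H being a subspace, this is equivalent to containing their span). *)
Definition contains_finite_rank (X Y : Banach) (H : (X -> Y) -> Prop) : Prop :=
  forall (f : X -> R) (y : Y), is_blfun X f -> H (fun x => bscal Y (f x) y).

Definition octahedral_opspace (X Y : Banach) (H : (X -> Y) -> Prop) : Prop :=
  octahedral_on H (op_zero X Y) (op_add X Y) (op_scal X Y) (opnorm X Y).

From Stdlib Require Import Reals List Classical ClassicalEpsilon ClassicalChoice
  FunctionalExtensionality PropExtensionality Lra Lia.
From mathcomp Require classical_sets boolp.
Open Scope R_scope.

(* Let T_1, ..., T_n in H and eps > 0 be given. The unit sphere of span {T_i} has a
   finite net {S_d}. By Hahn-Banach each S_d has a functional phi_d with
   |phi_d| <= ||S_d .|| and ||phi_d|| close to ||S_d||. Octahedrality of X^* gives x^*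
   of norm one with ||phi_d + x^*|| close to ||phi_d|| + 1, hence points u_d of B_X where
   phi_d and x^* nearly attain their norms simultaneously. Octahedrality of Y at the
   finitely many vectors T_i u_d gives y, and the rank-one operator x^* (x) y, which
   lies in H, is the required direction: on u_d the norm of S + lam x^* (x) y is that of
   S u_d + lam x^*(u_d) y. *)

(** * Norms and suprema over the unit ball *)

Lemma Rabs_m1 : Rabs (-1) = 1.
Proof. unfold Rabs; destruct Rcase_abs; lra. Qed.

Section BanachFacts.
Variable B : Banach.

Lemma bscal_0l (x : B) : bscal B 0 x = bzero B.
Proof.
assert (E : badd B (bscal B 0 x) (bscal B 0 x) = bscal B 0 x)
  by (rewrite <- bscal_addl; f_equal; ring).
rewrite <- (badd_0 B (bscal B 0 x)), <- (badd_opp B (bscal B 0 x)) at 1.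
rewrite badd_assoc, E. apply badd_opp.
Qed.

Lemma bscal_0r a : bscal B a (bzero B) = bzero B.
Proof. rewrite <- (bscal_0l (bzero B)), bscal_mul. f_equal; ring. Qed.

Lemma badd_0l (x : B) : badd B (bzero B) x = x.
Proof. rewrite badd_comm. apply badd_0. Qed.

Lemma badd_scal_m1 (x : B) : badd B x (bscal B (-1) x) = bzero B.
Proof.
rewrite <- (bscal_1 B x) at 1. rewrite <- bscal_addl, Rplus_opp_r. apply bscal_0l.
Qed.

Lemma badd_scal_m1_eq0 (x y : B) : badd B x (bscal B (-1) y) = bzero B -> x = y.
Proof.
intro H. rewrite <- (badd_0 B x), <- (badd_scal_m1 y), badd_assoc, (badd_comm B x y),
  <- badd_assoc, H. apply badd_0.
Qed.

Lemma badd_ACA (a b c d : B) :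
  badd B (badd B a b) (badd B c d) = badd B (badd B a c) (badd B b d).
Proof.
rewrite <- !badd_assoc. f_equal. rewrite !badd_assoc. f_equal. apply badd_comm.
Qed.

Lemma bscal_inv a (x y : B) : a <> 0 -> bscal B a x = y -> x = bscal B (/ a) y.
Proof.
intros Ha <-. rewrite bscal_mul, Rinv_l, bscal_1 by exact Ha. reflexivity.
Qed.

Lemma bnorm_0 : bnorm B (bzero B) = 0.
Proof. rewrite <- (bscal_0l (bzero B)), bnorm_scal, Rabs_R0. ring. Qed.

Lemma bnorm_scal_m1 (x : B) : bnorm B (bscal B (-1) x) = bnorm B x.
Proof. rewrite bnorm_scal, Rabs_m1. ring. Qed.

Lemma bnorm_ge0 (x : B) : 0 <= bnorm B x.
Proof.
assert (H := bnorm_triangle B x (bscal B (-1) x)).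
rewrite badd_scal_m1, bnorm_0, bnorm_scal_m1 in H. lra.
Qed.

End BanachFacts.

Section UnitBallSup.
Variables (X : Banach) (h : X -> R).

Definition ball_image : R -> Prop := fun t => exists x, bnorm X x <= 1 /\ t = h x.

Definition ball_bounded : Prop := exists M, forall x, bnorm X x <= 1 -> h x <= M.

Definition abs_homogeneous : Prop := forall a x, h (bscal X a x) = Rabs a * h x.

Hypothesis h_bounded : ball_bounded.

Lemma ball_sup_lub : is_lub ball_image (Rsup ball_image).
Proof.
unfold Rsup. apply epsilon_spec.
destruct (completeness ball_image) as [m Hm]; [| | exists m; exact Hm].
- destruct h_bounded as [M HM]. exists M. intros t [x [Hx ->]]. auto.
- exists (h (bzero X)), (bzero X). rewrite bnorm_0. split; [lra | reflexivity].
Qed.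

Lemma ball_sup_ub x : bnorm X x <= 1 -> h x <= Rsup ball_image.
Proof. intro Hx. apply (proj1 ball_sup_lub). exists x; auto. Qed.

Lemma ball_sup_le M : (forall x, bnorm X x <= 1 -> h x <= M) -> Rsup ball_image <= M.
Proof. intro HM. apply (proj2 ball_sup_lub). intros t [x [Hx ->]]. auto. Qed.

Lemma ball_sup_approx eta : 0 < eta ->
  exists x, bnorm X x <= 1 /\ Rsup ball_image - eta < h x.
Proof.
intro He. apply NNPP. intro Hn.
assert (Rsup ball_image <= Rsup ball_image - eta); [|lra].
apply ball_sup_le. intros x Hx. apply Rnot_lt_le. intro Hlt. apply Hn. exists x; auto.
Qed.

Hypothesis h_hom : abs_homogeneous.

Lemma abs_homogeneous_0 : h (bzero X) = 0.
Proof. rewrite <- (bscal_0l X (bzero X)), h_hom, Rabs_R0. ring. Qed.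

Lemma ball_sup_ge0 : 0 <= Rsup ball_image.
Proof. rewrite <- abs_homogeneous_0. apply ball_sup_ub. rewrite bnorm_0; lra. Qed.

Lemma ball_sup_scale x : h x <= Rsup ball_image * bnorm X x.
Proof.
destruct (bnorm_ge0 X x) as [Hp | H0].
- assert (Hx : x = bscal X (bnorm X x) (bscal X (/ bnorm X x) x)).
  { rewrite bscal_mul, Rinv_r, bscal_1 by lra. reflexivity. }
  rewrite Hx at 1. rewrite h_hom, Rabs_right by lra.
  assert (h (bscal X (/ bnorm X x) x) <= Rsup ball_image).
  { apply ball_sup_ub. rewrite bnorm_scal, Rabs_right, Rinv_l; [lra | lra |].
    left; apply Rinv_0_lt_compat; lra. }
  nra.
- rewrite (bnorm_eq0 X x (eq_sym H0)), abs_homogeneous_0, bnorm_0. lra.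
Qed.

End UnitBallSup.

Lemma blfun_ball_bounded X f : is_blfun X f -> ball_bounded X (fun x => Rabs (f x)).
Proof.
intros [_ [_ [M HM]]]. exists (Rabs M). intros x Hx.
apply (Rle_trans _ _ _ (HM x)). assert (H := bnorm_ge0 X x).
assert (M <= Rabs M) by apply Rle_abs. assert (0 <= Rabs M) by apply Rabs_pos. nra.
Qed.

Lemma blop_ball_bounded X Y T : is_blop X Y T -> ball_bounded X (fun x => bnorm Y (T x)).
Proof.
intros [_ [_ [M HM]]]. exists (Rabs M). intros x Hx.
apply (Rle_trans _ _ _ (HM x)). assert (H := bnorm_ge0 X x).
assert (M <= Rabs M) by apply Rle_abs. assert (0 <= Rabs M) by apply Rabs_pos. nra.
Qed.

Lemma blop_abs_homogeneous X Y T :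
  is_blop X Y T -> abs_homogeneous X (fun x => bnorm Y (T x)).
Proof. intros [_ [Hs _]] a x. rewrite Hs, bnorm_scal. reflexivity. Qed.

Section DualNorm.
Variables (X : Banach) (f : X -> R).

Lemma dualnorm_ub x : is_blfun X f -> bnorm X x <= 1 -> Rabs (f x) <= dualnorm X f.
Proof.
intros Hf. apply (ball_sup_ub X (fun x => Rabs (f x))), blfun_ball_bounded, Hf.
Qed.

Lemma dualnorm_le M : (forall x, bnorm X x <= 1 -> Rabs (f x) <= M) -> dualnorm X f <= M.
Proof.
intros HM. apply (ball_sup_le X (fun x => Rabs (f x))); [exists M |]; exact HM.
Qed.

Lemma dualnorm_approx eta : is_blfun X f -> 0 < eta ->
  exists x, bnorm X x <= 1 /\ dualnorm X f - eta < Rabs (f x).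
Proof.
intros Hf. apply (ball_sup_approx X (fun x => Rabs (f x))), blfun_ball_bounded, Hf.
Qed.

End DualNorm.

Section OperatorNorm.
Variables (X Y : Banach) (T : X -> Y).

Lemma opnorm_ub x : is_blop X Y T -> bnorm X x <= 1 -> bnorm Y (T x) <= opnorm X Y T.
Proof.
intros HT. apply (ball_sup_ub X (fun x => bnorm Y (T x))), blop_ball_bounded, HT.
Qed.

Lemma opnorm_le M : (forall x, bnorm X x <= 1 -> bnorm Y (T x) <= M) -> opnorm X Y T <= M.
Proof.
intros HM. apply (ball_sup_le X (fun x => bnorm Y (T x))); [exists M |]; exact HM.
Qed.

Lemma opnorm_approx eta : is_blop X Y T -> 0 < eta ->
  exists x, bnorm X x <= 1 /\ opnorm X Y T - eta < bnorm Y (T x).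
Proof.
intros HT. apply (ball_sup_approx X (fun x => bnorm Y (T x))), blop_ball_bounded, HT.
Qed.

Lemma opnorm_ge0 : is_blop X Y T -> 0 <= opnorm X Y T.
Proof.
intros HT. apply (ball_sup_ge0 X (fun x => bnorm Y (T x))).
- apply blop_ball_bounded, HT.
- apply blop_abs_homogeneous, HT.
Qed.

Lemma opnorm_scale x : is_blop X Y T -> bnorm Y (T x) <= opnorm X Y T * bnorm X x.
Proof.
intros HT. apply (ball_sup_scale X (fun x => bnorm Y (T x))).
- apply blop_ball_bounded, HT.
- apply blop_abs_homogeneous, HT.
Qed.

End OperatorNorm.

Lemma opnorm_ext (X Y : Banach) (S T : X -> Y) :
  (forall x, S x = T x) -> opnorm X Y S = opnorm X Y T.
Proof. intro H. f_equal. apply functional_extensionality, H. Qed.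

Lemma opnorm_rank_one_unit (X Y : Banach) (f : X -> R) (y : Y) :
  bnorm Y y = 1 -> opnorm X Y (fun x => bscal Y (f x) y) = dualnorm X f.
Proof.
intro Hy. unfold opnorm, dualnorm. f_equal.
apply functional_extensionality. intro t. apply propositional_extensionality.
split; intros [x [Hx ->]]; exists x; split; auto; rewrite bnorm_scal, Hy; ring.
Qed.

Lemma blfun_add_scal X f g lam : is_blfun X f -> is_blfun X g ->
  is_blfun X (fun z => f z + lam * g z).
Proof.
intros [fa [fs [M HM]]] [ga [gs [N HN]]]. split; [| split].
- intros x y. rewrite fa, ga. ring.
- intros a x. rewrite fs, gs. ring.
- exists (M + Rabs lam * N). intro x.
  apply (Rle_trans _ _ _ (Rabs_triang _ _)). rewrite Rabs_mult.
  specialize (HM x); specialize (HN x). assert (0 <= Rabs lam) by apply Rabs_pos.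
  assert (Rabs lam * Rabs (g x) <= Rabs lam * (N * bnorm X x))
    by (apply Rmult_le_compat_l; auto).
  lra.
Qed.

Section OperatorSpace.
Variables X Y : Banach.

Lemma blop_zero : is_blop X Y (op_zero X Y).
Proof.
unfold op_zero. split; [| split].
- intros; rewrite badd_0; reflexivity.
- intros; rewrite bscal_0r; reflexivity.
- exists 0. intros; rewrite bnorm_0. lra.
Qed.

Lemma blop_add S T : is_blop X Y S -> is_blop X Y T -> is_blop X Y (op_add X Y S T).
Proof.
intros [Sa [Ss [M HM]]] [Ta [Ts [N HN]]]. unfold op_add. split; [| split].
- intros x y. rewrite Sa, Ta. apply badd_ACA.
- intros a x. rewrite Ss, Ts, bscal_addr. reflexivity.
- exists (M + N). intro x. apply (Rle_trans _ _ _ (bnorm_triangle _ _ _)).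
  specialize (HM x); specialize (HN x). lra.
Qed.

Lemma blop_scal a T : is_blop X Y T -> is_blop X Y (op_scal X Y a T).
Proof.
intros [Ta [Ts [N HN]]]. unfold op_scal. split; [| split].
- intros x y. rewrite Ta, bscal_addr. reflexivity.
- intros b x. rewrite Ts, !bscal_mul. f_equal; ring.
- exists (Rabs a * N). intro x. rewrite bnorm_scal. specialize (HN x).
  assert (0 <= Rabs a) by apply Rabs_pos. nra.
Qed.

Lemma opnorm_triangle S T : is_blop X Y S -> is_blop X Y T ->
  opnorm X Y (op_add X Y S T) <= opnorm X Y S + opnorm X Y T.
Proof.
intros HS HT. apply opnorm_le. intros x Hx. unfold op_add.
apply (Rle_trans _ _ _ (bnorm_triangle _ _ _)).
assert (H1 := opnorm_ub X Y S x HS Hx). assert (H2 := opnorm_ub X Y T x HT Hx). lra.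
Qed.

Lemma opnorm_scal_le a T : is_blop X Y T ->
  opnorm X Y (op_scal X Y a T) <= Rabs a * opnorm X Y T.
Proof.
intros HT. apply opnorm_le. intros x Hx. unfold op_scal. rewrite bnorm_scal.
assert (H1 := opnorm_ub X Y T x HT Hx). assert (0 <= Rabs a) by apply Rabs_pos. nra.
Qed.

Lemma opnorm_scal a T : is_blop X Y T ->
  opnorm X Y (op_scal X Y a T) = Rabs a * opnorm X Y T.
Proof.
intros HT. apply Rle_antisym; [apply opnorm_scal_le, HT |].
destruct (Req_dec a 0) as [-> | Ha].
- rewrite Rabs_R0, Rmult_0_l. apply opnorm_ge0, blop_scal, HT.
- assert (H := opnorm_scal_le (/ a) _ (blop_scal a T HT)).
  rewrite (opnorm_ext X Y _ T) in H.
  + rewrite Rabs_inv in H. assert (0 < Rabs a) by (apply Rabs_pos_lt, Ha).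
    apply (Rmult_le_reg_l (/ Rabs a)); [apply Rinv_0_lt_compat; lra |].
    rewrite <- Rmult_assoc, Rinv_l, Rmult_1_l by lra. exact H.
  + intro x. unfold op_scal. rewrite bscal_mul, Rinv_l, bscal_1 by exact Ha. reflexivity.
Qed.

End OperatorSpace.

(** * Hahn-Banach *)

Lemma zorn_premaximal (T : Type) (t0 : T) (R : T -> T -> Prop) :
  (forall t, R t t) -> (forall r s t, R r s -> R s t -> R r t) ->
  (forall A : T -> Prop, (forall s t, A s -> A t -> R s t \/ R t s) ->
     exists t, forall s, A s -> R s t) ->
  exists t, forall s, R t s -> R s t.
Proof.
intros Hrefl Htrans Hchain.
destruct (@classical_sets.ZL_preorder T t0 (fun a b => boolp.asbool (R a b))) as [t Ht].
- intro t. apply boolp.asboolT, Hrefl.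
- intros r s t H1%boolp.asboolW H2%boolp.asboolW. apply boolp.asboolT. eauto.
- intros A HA. destruct (Hchain A) as [t Hub].
  + intros s t Hs Ht. destruct (HA s t Hs Ht) as [H | H]; [left | right];
      apply boolp.asboolW, H.
  + exists t. intros s Hs. apply boolp.asboolT, Hub, Hs.
- exists t. intros s Hs. apply boolp.asboolW, Ht, boolp.asboolT, Hs.
Qed.

Section HahnBanach.
Variables (X : Banach) (p : X -> R).

Definition is_seminorm : Prop :=
  (forall x y, p (badd X x y) <= p x + p y) /\ abs_homogeneous X p.

Definition is_subspace (D : X -> Prop) : Prop :=
  D (bzero X) /\
  (forall x y, D x -> D y -> D (badd X x y)) /\
  (forall a x, D x -> D (bscal X a x)).

Record partial_functional := { pdom : X -> Prop; pval : X -> R }.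

Definition dominated (e : partial_functional) : Prop :=
  is_subspace (pdom e) /\
  (forall x y, pdom e x -> pdom e y -> pval e (badd X x y) = pval e x + pval e y) /\
  (forall a x, pdom e x -> pval e (bscal X a x) = a * pval e x) /\
  (forall x, pdom e x -> pval e x <= p x).

Definition extends (e1 e2 : partial_functional) : Prop :=
  forall x, pdom e1 x -> pdom e2 x /\ pval e2 x = pval e1 x.

Lemma extends_refl e : extends e e.
Proof. intros x Hx; auto. Qed.

Lemma extends_trans e1 e2 e3 : extends e1 e2 -> extends e2 e3 -> extends e1 e3.
Proof.
intros H12 H23 x Hx. destruct (H12 x Hx) as [H2 E2]. destruct (H23 x H2) as [H3 E3].
split; congruence.
Qed.

Hypothesis p_seminorm : is_seminorm.

Lemma seminorm_ge0 x : 0 <= p x.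
Proof.
destruct p_seminorm as [Hadd Hhom]. assert (H := Hadd x (bscal X (-1) x)).
rewrite badd_scal_m1, Hhom, Rabs_m1, (abs_homogeneous_0 X p Hhom) in H. lra.
Qed.

Lemma dominated_0 e : dominated e -> pval e (bzero X) = 0.
Proof.
intros [[H0 _] [_ [Hhom _]]]. rewrite <- (bscal_0l X (bzero X)), Hhom by exact H0. ring.
Qed.

Lemma subspace_decomp_unique D z d1 d2 t1 t2 : is_subspace D -> ~ D z -> D d1 -> D d2 ->
  badd X d1 (bscal X t1 z) = badd X d2 (bscal X t2 z) -> t1 = t2 /\ d1 = d2.
Proof.
intros [_ [Hadd Hscal]] Hz Hd1 Hd2 E.
set (w := badd X (bscal X (-1) d1) (bscal X (-t2) z)).
assert (E1 : badd X (badd X d1 (bscal X t1 z)) w = bscal X (t1 - t2) z).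
{ unfold w. rewrite badd_ACA, badd_scal_m1, badd_0l, <- bscal_addl. f_equal; ring. }
assert (E2 : badd X (badd X d2 (bscal X t2 z)) w = badd X d2 (bscal X (-1) d1)).
{ unfold w. rewrite badd_ACA, <- (bscal_addl X t2), Rplus_opp_r, bscal_0l, badd_0.
  reflexivity. }
rewrite E, E2 in E1.
destruct (Req_dec t1 t2) as [<- | Ht].
- rewrite Rminus_diag, bscal_0l in E1. split; [reflexivity |].
  symmetry. apply badd_scal_m1_eq0, E1.
- exfalso. apply Hz. rewrite (bscal_inv X (t1 - t2) z _ ltac:(lra) (eq_sym E1)).
  apply Hscal, Hadd, Hscal; assumption.
Qed.

(* After dividing by [|t|], the claim is the lower bound on [c] when [t < 0] and the
   upper bound when [t > 0]. *)
Lemma dominated_step e z c d t : dominated e -> pdom e d ->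
  (forall d, pdom e d -> pval e d - p (badd X d (bscal X (-1) z)) <= c) ->
  (forall d, pdom e d -> c <= p (badd X d z) - pval e d) ->
  pval e d + t * c <= p (badd X d (bscal X t z)).
Proof.
intros [[_ [_ Hscal]] [_ [Hhom Hdom]]] Hd Hlow Hup.
destruct p_seminorm as [_ Hp].
destruct (Rtotal_order t 0) as [Ht | [-> | Ht]].
- specialize (Hlow (bscal X (/ - t) d) (Hscal _ _ Hd)). rewrite Hhom in Hlow by exact Hd.
  assert (E : badd X d (bscal X t z) =
              bscal X (- t) (badd X (bscal X (/ - t) d) (bscal X (-1) z))).
  { rewrite bscal_addr, !bscal_mul, Rinv_r, bscal_1 by lra. do 2 f_equal. ring. }
  rewrite E, Hp, Rabs_right by lra.
  set (q := p (badd X (bscal X (/ - t) d) (bscal X (-1) z))) in *.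
  assert (- t * (/ - t * pval e d - q) <= - t * c) by (apply Rmult_le_compat_l; lra).
  replace (- t * (/ - t * pval e d - q)) with (pval e d - - t * q) in H by (field; lra).
  lra.
- rewrite bscal_0l, badd_0, Rmult_0_l, Rplus_0_r. apply Hdom, Hd.
- specialize (Hup (bscal X (/ t) d) (Hscal _ _ Hd)). rewrite Hhom in Hup by exact Hd.
  assert (E : badd X d (bscal X t z) = bscal X t (badd X (bscal X (/ t) d) z)).
  { rewrite bscal_addr, !bscal_mul, Rinv_r, bscal_1 by lra. reflexivity. }
  rewrite E, Hp, Rabs_right by lra.
  set (q := p (badd X (bscal X (/ t) d) z)) in *.
  assert (t * c <= t * (q - / t * pval e d)) by (apply Rmult_le_compat_l; lra).
  replace (t * (q - / t * pval e d)) with (t * q - pval e d) in H by (field; lra).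
  lra.
Qed.

Lemma dominated_extend_one e z c : dominated e -> ~ pdom e z ->
  (forall d, pdom e d -> pval e d - p (badd X d (bscal X (-1) z)) <= c) ->
  (forall d, pdom e d -> c <= p (badd X d z) - pval e d) ->
  exists e', dominated e' /\ extends e e' /\ pdom e' z /\ pval e' z = c.
Proof.
intros He Hz Hlow Hup.
pose proof He as [[H0 [Hadd Hscal]] [Hgadd [Hghom _]]].
pose (D' := fun x => exists d t, pdom e d /\ x = badd X d (bscal X t z)).
pose (pick := fun x => epsilon (inhabits (bzero X, 0))
        (fun dt : X * R => pdom e (fst dt) /\ x = badd X (fst dt) (bscal X (snd dt) z))).
pose (e' := {| pdom := D'; pval := fun x => pval e (fst (pick x)) + snd (pick x) * c |}).
assert (Hval : forall d t, pdom e d -> pval e' (badd X d (bscal X t z)) = pval e d + t * c).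
{ intros d t Hd. simpl.
  assert (Hs : pdom e (fst (pick (badd X d (bscal X t z)))) /\
     badd X d (bscal X t z) = badd X (fst (pick (badd X d (bscal X t z))))
        (bscal X (snd (pick (badd X d (bscal X t z)))) z)).
  { unfold pick. apply epsilon_spec. exists (d, t). simpl; auto. }
  destruct Hs as [Hs1 Hs2].
  destruct (subspace_decomp_unique _ _ _ _ _ _ (proj1 He) Hz Hs1 Hd (eq_sym Hs2))
    as [-> ->].
  reflexivity. }
exists e'. split; [| split; [| split]].
- split; [split; [| split] | split; [| split]].
  + exists (bzero X), 0. split; [exact H0 |]. rewrite bscal_0l, badd_0. reflexivity.
  + intros x y [d1 [t1 [Hd1 ->]]] [d2 [t2 [Hd2 ->]]]. exists (badd X d1 d2), (t1 + t2).
    split; [auto |]. rewrite badd_ACA, bscal_addl. reflexivity.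
  + intros a x [d [t [Hd ->]]]. exists (bscal X a d), (a * t). split; [auto |].
    rewrite bscal_addr, bscal_mul. reflexivity.
  + intros x y [d1 [t1 [Hd1 ->]]] [d2 [t2 [Hd2 ->]]].
    rewrite badd_ACA, <- bscal_addl, !Hval, Hgadd by auto. ring.
  + intros a x [d [t [Hd ->]]]. rewrite bscal_addr, bscal_mul, !Hval, Hghom by auto. ring.
  + intros x [d [t [Hd ->]]]. rewrite Hval by exact Hd.
    apply (dominated_step e z c); assumption.
- intros x Hx. split.
  + exists x, 0. split; [exact Hx |]. rewrite bscal_0l, badd_0. reflexivity.
  + rewrite <- (badd_0 X x) at 1. rewrite <- (bscal_0l X z), Hval by exact Hx. ring.
- exists (bzero X), 1. split; [exact H0 |]. rewrite bscal_1, badd_0l. reflexivity.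
- rewrite <- (badd_0l X z) at 1. rewrite <- (bscal_1 X z) at 1.
  rewrite Hval, (dominated_0 e He) by exact H0. ring.
Qed.

Lemma dominated_gap e z d d' : dominated e -> pdom e d -> pdom e d' ->
  pval e d - p (badd X d (bscal X (-1) z)) <= p (badd X d' z) - pval e d'.
Proof.
intros [[_ [Hadd _]] [Hgadd [_ Hdom]]] Hd Hd'.
assert (E : badd X d d' = badd X (badd X d (bscal X (-1) z)) (badd X d' z)).
{ rewrite badd_ACA, (badd_comm X _ z), badd_scal_m1, badd_0. reflexivity. }
assert (H1 := Hdom _ (Hadd _ _ Hd Hd')). rewrite Hgadd, E in H1 by assumption.
assert (H2 := proj1 p_seminorm (badd X d (bscal X (-1) z)) (badd X d' z)). lra.
Qed.

Lemma dominated_chain_ub (A : partial_functional -> Prop) :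
  (forall e, A e -> dominated e) ->
  (forall e1 e2, A e1 -> A e2 -> extends e1 e2 \/ extends e2 e1) ->
  (exists e, A e) ->
  exists u, dominated u /\ forall e, A e -> extends e u.
Proof.
intros Hdom Hchain [e0 He0].
pose (owner := fun x => epsilon (inhabits e0) (fun e => A e /\ pdom e x)).
pose (u := {| pdom := fun x => exists e, A e /\ pdom e x;
              pval := fun x => pval (owner x) x |}).
assert (Hval : forall e x, A e -> pdom e x -> pval u x = pval e x).
{ intros e x He Hx. simpl.
  assert (Ho : A (owner x) /\ pdom (owner x) x).
  { unfold owner. apply epsilon_spec. exists e; auto. }
  destruct (Hchain e (owner x) He (proj1 Ho)) as [H | H].
  - apply (H x Hx).
  - symmetry. apply (H x (proj2 Ho)). }
assert (Hjoin : forall e1 e2, A e1 -> A e2 -> exists e, A e /\ extends e1 e /\ extends e2 e).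
{ intros e1 e2 H1 H2. destruct (Hchain e1 e2 H1 H2) as [H | H].
  - exists e2. split; [| split]; auto using extends_refl.
  - exists e1. split; [| split]; auto using extends_refl. }
exists u. split.
- split; [split; [| split] | split; [| split]].
  + exists e0. split; [exact He0 | apply (proj1 (proj1 (Hdom e0 He0)))].
  + intros x y [e1 [He1 Hx]] [e2 [He2 Hy]].
    destruct (Hjoin e1 e2 He1 He2) as [e [He [E1 E2]]].
    destruct (Hdom e He) as [[_ [Hadd _]] _].
    exists e. split; [exact He |]. apply Hadd; [apply (E1 x Hx) | apply (E2 y Hy)].
  + intros a x [e [He Hx]]. exists e. split; [exact He |].
    apply (proj2 (proj2 (proj1 (Hdom e He)))), Hx.
  + intros x y [e1 [He1 Hx]] [e2 [He2 Hy]].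
    destruct (Hjoin e1 e2 He1 He2) as [e [He [E1 E2]]].
    destruct (Hdom e He) as [[_ [Hadd _]] [Hgadd _]].
    destruct (E1 x Hx) as [Hx' _]. destruct (E2 y Hy) as [Hy' _].
    rewrite !(Hval e) by auto. apply Hgadd; assumption.
  + intros a x [e [He Hx]]. destruct (Hdom e He) as [[_ [_ Hscal]] [_ [Hghom _]]].
    rewrite !(Hval e) by auto. apply Hghom, Hx.
  + intros x [e [He Hx]]. rewrite (Hval e) by auto. apply (Hdom e He), Hx.
- intros e He x Hx. split; [exists e; auto | apply Hval; assumption].
Qed.

(* The supremum of the gap set of [dominated_gap] is an admissible value at a point
   outside the domain. *)
Lemma dominated_premaximal_total e : dominated e ->
  (forall e', dominated e' -> extends e e' -> extends e' e) -> forall z, pdom e z.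
Proof.
intros He Hmax z. apply NNPP. intro Hz.
pose (G := fun r => exists d, pdom e d /\ r = pval e d - p (badd X d (bscal X (-1) z))).
assert (H0 : pdom e (bzero X)) by apply (proj1 (proj1 He)).
destruct (completeness G) as [m [Hm_ub Hm_lub]].
- exists (p (badd X (bzero X) z) - pval e (bzero X)). intros r [d [Hd ->]].
  apply dominated_gap; assumption.
- exists (pval e (bzero X) - p (badd X (bzero X) (bscal X (-1) z))). exists (bzero X); auto.
- destruct (dominated_extend_one e z m He Hz) as [e' [He' [Hext [Hz' _]]]].
  + intros d Hd. apply Hm_ub. exists d; auto.
  + intros d Hd. apply Hm_lub. intros r [d' [Hd' ->]]. apply dominated_gap; assumption.
  + apply Hz, (Hmax e' He' Hext z Hz').
Qed.

Lemma dominated_base x0 : exists e, dominated e /\ pdom e x0 /\ pval e x0 = p x0.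
Proof.
assert (Hp0 : p (bzero X) = 0) by apply (abs_homogeneous_0 X p (proj2 p_seminorm)).
pose (e0 := {| pdom := fun x => x = bzero X; pval := fun _ => 0 |}).
assert (He0 : dominated e0).
{ split; [split; [| split] | split; [| split]]; simpl; intros; subst.
  - reflexivity.
  - apply badd_0.
  - apply bscal_0r.
  - ring.
  - ring.
  - rewrite Hp0; lra. }
destruct (classic (x0 = bzero X)) as [-> | Hx0].
- exists e0. simpl. auto.
- destruct (dominated_extend_one e0 x0 (p x0) He0 Hx0) as [e [He [_ [Hx Hv]]]].
  + simpl. intros d ->. rewrite badd_0l, (proj2 p_seminorm), Rabs_m1.
    assert (0 <= p x0) by apply seminorm_ge0. lra.
  + simpl. intros d ->. rewrite badd_0l. lra.
  + exists e. auto.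
Qed.

Theorem hahn_banach x0 : exists phi : X -> R,
  (forall x y, phi (badd X x y) = phi x + phi y) /\
  (forall a x, phi (bscal X a x) = a * phi x) /\
  (forall x, phi x <= p x) /\ phi x0 = p x0.
Proof.
pose (Good := fun e => dominated e /\ pdom e x0 /\ pval e x0 = p x0).
destruct (dominated_base x0) as [e0 He0].
pose (T := {e | Good e}).
destruct (zorn_premaximal T (exist _ e0 He0) (fun s t => extends (proj1_sig s) (proj1_sig t)))
  as [[t [Ht [Htx0 Htv]]] Hmax].
- intro. apply extends_refl.
- intros r s t. apply extends_trans.
- intros A HA. destruct (classic (exists s, A s)) as [[s0 Hs0] | Hne].
  + destruct (dominated_chain_ub (fun e => exists s : T, A s /\ proj1_sig s = e))
      as [u [Hu Hub]].
    * intros e [s [_ <-]]. apply (proj2_sig s).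
    * intros e1 e2 [s1 [H1 <-]] [s2 [H2 <-]]. apply HA; assumption.
    * exists (proj1_sig s0), s0. auto.
    * destruct (Hub (proj1_sig s0) (ex_intro _ s0 (conj Hs0 eq_refl)) x0
        (proj1 (proj2 (proj2_sig s0)))) as [Hux0 Huv].
      assert (Hg : Good u).
      { split; [exact Hu | split; [exact Hux0 |]]. rewrite Huv. apply (proj2_sig s0). }
      exists (exist _ u Hg). intros s Hs. apply Hub. exists s; auto.
  + exists (exist _ e0 He0). intros s Hs. exfalso. apply Hne. exists s; exact Hs.
- simpl in Hmax.
  assert (Htotal : forall z, pdom t z).
  { apply dominated_premaximal_total; [exact Ht |]. intros e' He' Hext.
    destruct (Hext x0 Htx0) as [Hx0' Hv'].
    assert (Hg : Good e') by (split; [exact He' | split; [exact Hx0' | congruence]]).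
    apply (Hmax (exist _ e' Hg)), Hext. }
  destruct Ht as [_ [Hgadd [Hghom Hdom]]].
  exists (pval t). split; [| split; [| split]]; auto.
Qed.

End HahnBanach.

(** * Finite nets for seminorms on coefficient sequences *)

Lemma interval_net (A h : R) : 0 < h -> 0 <= A ->
  exists ts, forall t, Rabs t <= A -> exists t', In t' ts /\ Rabs (t - t') <= h.
Proof.
intros Hh HA. destruct (INR_archimed h (2 * A)) as [M HM]; [lra |].
assert (Hstep : forall m t, -A <= t <= -A + INR m * h ->
          exists j, (j <= m)%nat /\ Rabs (t - (-A + INR j * h)) <= h).
{ induction m as [| m IH]; intros t Ht.
  - exists O. split; [lia |]. simpl in *. rewrite Rmult_0_l in *.
    unfold Rabs; destruct Rcase_abs; lra.
  - destruct (Rle_dec t (-A + INR m * h)) as [Hle | Hgt].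
    + destruct (IH t (conj (proj1 Ht) Hle)) as [j [Hj Hj']]. exists j; split; [lia | exact Hj'].
    + exists (S m). split; [lia |]. rewrite S_INR in *. unfold Rabs; destruct Rcase_abs; nra. }
exists (map (fun j => -A + INR j * h) (seq 0 (S M))).
intros t Ht. destruct (Hstep M t) as [j [Hj Hj']].
- unfold Rabs in Ht; destruct Rcase_abs in Ht; lra.
- exists (-A + INR j * h). split; [| exact Hj'].
  apply (in_map (fun j => -A + INR j * h)), in_seq. lia.
Qed.

Definition coef_seminorm (N : (nat -> R) -> R) : Prop :=
  (forall c d, N (fun i => c i + d i) <= N c + N d) /\
  (forall a c, N (fun i => a * c i) = Rabs a * N c).

Definition depends_on_first (n : nat) (N : (nat -> R) -> R) : Prop :=
  forall c d, (forall i, (i < n)%nat -> c i = d i) -> N c = N d.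

Definition has_finite_nets (N : (nat -> R) -> R) : Prop :=
  forall r delta, 0 < delta -> exists L : list (nat -> R),
    forall c, N c <= r -> exists d, In d L /\ N (fun i => c i - d i) <= delta.

Definition vcons (t : R) (v : nat -> R) : nat -> R :=
  fun i => match i with O => t | S j => v j end.

Lemma seminorm_ext (N : (nat -> R) -> R) c d : (forall i, c i = d i) -> N c = N d.
Proof. intro H. f_equal. apply functional_extensionality, H. Qed.

Lemma mul_half_fraction_le x delta : 0 <= x -> 0 < delta ->
  x * (delta / (2 * (x + 1))) <= delta / 2.
Proof.
intros Hx Hdelta.
replace (x * (delta / (2 * (x + 1)))) with (delta / 2 - delta / (2 * (x + 1))) by (field; lra).
assert (0 < delta / (2 * (x + 1))) by (apply Rdiv_lt_0_compat; lra). lra.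
Qed.

Section CoefSeminorm.
Variable N : (nat -> R) -> R.
Hypothesis HN : coef_seminorm N.

Lemma coef_seminorm_0 : N (fun _ => 0) = 0.
Proof.
rewrite (seminorm_ext N _ (fun _ => 0 * 0)) by (intros; ring).
rewrite (proj2 HN 0 (fun _ => 0)), Rabs_R0. ring.
Qed.

Lemma coef_seminorm_ge0 c : 0 <= N c.
Proof.
assert (H := proj1 HN c (fun i => -1 * c i)).
rewrite (seminorm_ext N _ (fun _ => 0)), coef_seminorm_0, (proj2 HN), Rabs_m1 in H
  by (intros; ring).
lra.
Qed.

Lemma coef_seminorm_sub_triangle c d e :
  N (fun i => c i - e i) <= N (fun i => c i - d i) + N (fun i => d i - e i).
Proof.
rewrite (seminorm_ext N _ (fun i => (c i - d i) + (d i - e i))) by (intros; ring).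
apply HN.
Qed.

Lemma coef_seminorm_sub_sym c d : N (fun i => c i - d i) = N (fun i => d i - c i).
Proof.
rewrite (seminorm_ext N _ (fun i => -1 * (d i - c i))) by (intros; ring).
rewrite (proj2 HN), Rabs_m1. ring.
Qed.

Lemma coef_seminorm_near c d a : N (fun i => c i - d i) <= a -> N c - a <= N d <= N c + a.
Proof.
intro Hcd. assert (H1 := coef_seminorm_sub_triangle c d (fun _ => 0)).
assert (H2 := coef_seminorm_sub_triangle d c (fun _ => 0)).
cbv beta in H1, H2.
rewrite (seminorm_ext N (fun i => c i - 0) c), (seminorm_ext N (fun i => d i - 0) d)
  in H1, H2 by (intros; ring).
rewrite coef_seminorm_sub_sym in H2. lra.
Qed.

Lemma coef_seminorm_tail : coef_seminorm (fun v => N (vcons 0 v)).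
Proof.
destruct HN as [Hadd Hhom]. split.
- intros c d. rewrite (seminorm_ext N _ (fun i => vcons 0 c i + vcons 0 d i))
    by (intros [| i]; simpl; ring).
  apply Hadd.
- intros a c. rewrite (seminorm_ext N _ (fun i => a * vcons 0 c i))
    by (intros [| i]; simpl; ring).
  apply Hhom.
Qed.

Lemma separated_head_bound d0 : (forall v, d0 <= N (vcons 1 v)) ->
  forall c, Rabs (c O) * d0 <= N c.
Proof.
intros Hsep c. destruct (Req_dec (c O) 0) as [Hc0 | Hc0].
- rewrite Hc0, Rabs_R0, Rmult_0_l. apply coef_seminorm_ge0.
- rewrite (seminorm_ext N c (fun i => c O * vcons 1 (fun j => c (S j) / c O) i))
    by (intros [| i]; simpl; field; exact Hc0).
  rewrite (proj2 HN). apply Rmult_le_compat_l; [apply Rabs_pos | apply Hsep].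
Qed.

Lemma finite_nets_separated : has_finite_nets (fun v => N (vcons 0 v)) ->
  (exists d0, 0 < d0 /\ forall v, d0 <= N (vcons 1 v)) -> has_finite_nets N.
Proof.
intros Htail [d0 [Hd0 Hsep]] r delta Hdelta.
destruct HN as [Hadd Hhom].
set (K := N (vcons 1 (fun _ => 0))).
assert (HK : 0 <= K) by apply coef_seminorm_ge0.
set (A := Rabs r / d0).
assert (HA : 0 <= A)
  by (apply Rmult_le_pos; [apply Rabs_pos | left; apply Rinv_0_lt_compat, Hd0]).
destruct (Htail (Rabs r + A * K) (delta / 2)) as [L' HL']; [lra |].
destruct (interval_net A (delta / (2 * (K + 1)))) as [ts Hts];
  [apply Rdiv_lt_0_compat; lra | exact HA |].
exists (flat_map (fun t => map (vcons t) L') ts).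
intros c Hc. set (t := c O). set (v := fun j => c (S j)).
assert (Ht : Rabs t <= A).
{ assert (H := separated_head_bound d0 Hsep c). fold t in H.
  unfold A. apply (Rmult_le_reg_r d0); [exact Hd0 |].
  unfold Rdiv. rewrite Rmult_assoc, Rinv_l by lra.
  assert (r <= Rabs r) by apply Rle_abs. lra. }
assert (Hv : N (vcons 0 v) <= Rabs r + A * K).
{ rewrite (seminorm_ext N _ (fun i => c i + - t * vcons 1 (fun _ => 0) i))
    by (intros [| i]; unfold v, t; simpl; ring).
  apply (Rle_trans _ _ _ (Hadd _ _)). rewrite Hhom. fold K. rewrite Rabs_Ropp.
  assert (r <= Rabs r) by apply Rle_abs. assert (0 <= Rabs t) by apply Rabs_pos. nra. }
destruct (HL' v Hv) as [d' [Hd'L Hd']].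
destruct (Hts t Ht) as [t' [Ht'ts Htt']].
exists (vcons t' d'). split.
- apply in_flat_map. exists t'. split; [exact Ht'ts | apply in_map, Hd'L].
- rewrite (seminorm_ext N _ (fun i => vcons 0 (fun j => v j - d' j) i
                                     + (t - t') * vcons 1 (fun _ => 0) i))
    by (intros [| i]; unfold v, t; simpl; ring).
  apply (Rle_trans _ _ _ (Hadd _ _)). rewrite Hhom. fold K.
  assert (Rabs (t - t') * K <= delta / (2 * (K + 1)) * K) by (apply Rmult_le_compat_r; auto).
  assert (HKdelta := mul_half_fraction_le K delta HK Hdelta). lra.
Qed.

Lemma finite_nets_degenerate : has_finite_nets (fun v => N (vcons 0 v)) ->
  (forall d0, 0 < d0 -> exists v, N (vcons 1 v) < d0) -> has_finite_nets N.
Proof.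
intros Htail Hdeg r delta Hdelta.
destruct (Htail (Rabs r + delta) (delta / 2)) as [L' HL']; [lra |].
exists (map (vcons 0) L'). intros c Hc.
set (t := c O). set (v := fun j => c (S j)).
assert (Ht0 : 0 <= Rabs t) by apply Rabs_pos.
destruct (Hdeg (delta / (2 * (Rabs t + 1)))) as [v0 Hv0]; [apply Rdiv_lt_0_compat; lra |].
set (w := vcons 0 (fun j => v j - t * v0 j)).
assert (Hcw : N (fun i => c i - w i) <= delta / 2).
{ rewrite (seminorm_ext N _ (fun i => t * vcons 1 v0 i))
    by (intros [| i]; unfold w, v, t; simpl; ring).
  rewrite (proj2 HN).
  assert (Rabs t * N (vcons 1 v0) <= Rabs t * (delta / (2 * (Rabs t + 1))))
    by (apply Rmult_le_compat_l; lra).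
  assert (Htdelta := mul_half_fraction_le (Rabs t) delta Ht0 Hdelta). lra. }
assert (Hw : N (vcons 0 (fun j => v j - t * v0 j)) <= Rabs r + delta).
{ fold w. destruct (coef_seminorm_near c w (delta / 2)) as [_ H];
    [exact Hcw |].
  assert (r <= Rabs r) by apply Rle_abs. lra. }
destruct (HL' _ Hw) as [d' [Hd'L Hd']].
exists (vcons 0 d'). split; [apply in_map, Hd'L |].
apply (Rle_trans _ _ _ (coef_seminorm_sub_triangle c w _)).
rewrite (seminorm_ext N (fun i => w i - vcons 0 d' i)
                        (vcons 0 (fun j => (v j - t * v0 j) - d' j)))
  by (intros [| i]; unfold w; simpl; ring).
lra.
Qed.

End CoefSeminorm.

(* Induction on the number of coordinates: either [e_0] stays at positive distance
   from the other coordinate axes, and the first coordinate is bounded on balls, or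
   it does not, and the first coordinate can be absorbed into the others. *)
Theorem coef_seminorm_finite_nets n : forall N, coef_seminorm N ->
  depends_on_first n N -> has_finite_nets N.
Proof.
induction n as [| n IH]; intros N HN Hdep.
- intros r delta Hdelta. exists ((fun _ => 0) :: nil). intros c _.
  exists (fun _ => 0). split; [left; reflexivity |].
  rewrite (Hdep _ (fun _ => 0)), coef_seminorm_0 by (auto || lia). lra.
- assert (Htail : has_finite_nets (fun v => N (vcons 0 v))).
  { apply IH; [apply coef_seminorm_tail, HN |].
    intros c d Hcd. apply Hdep. intros [| i] Hi; simpl; [reflexivity |]. apply Hcd. lia. }
  destruct (classic (exists d0, 0 < d0 /\ forall v, d0 <= N (vcons 1 v))) as [Hsep | Hdeg].
  + apply finite_nets_separated; assumption.
  + apply finite_nets_degenerate; [exact HN | exact Htail |].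
    intros d0 Hd0. apply NNPP. intro Hn. apply Hdeg. exists d0. split; [exact Hd0 |].
    intro v. apply Rnot_lt_le. intro Hlt. apply Hn. exists v; exact Hlt.
Qed.

(** * Linear combinations of operators *)

Section Spans.
Variables (V : Type) (zero : V) (add : V -> V -> V) (scal : R -> V -> V).
Hypothesis add_scal0 : forall e x, add (scal 0 e) x = x.

Lemma lincomb_repeat0 l : lincomb zero add scal (repeat 0 (length l)) l = zero.
Proof. induction l as [| e l IH]; simpl; [reflexivity |]. rewrite IH. apply add_scal0. Qed.

Lemma in_span_app_l l1 l v : in_span zero add scal l v -> in_span zero add scal (l1 ++ l) v.
Proof.
intro H. induction l1 as [| e l1 [cs [Hl ->]]]; simpl; [exact H |].
exists (0 :: cs). simpl. split; [congruence | symmetry; apply add_scal0].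
Qed.

Lemma in_span_app_r l l2 v : in_span zero add scal l v -> in_span zero add scal (l ++ l2) v.
Proof.
intros [cs [Hl ->]]. exists (cs ++ repeat 0 (length l2)). split.
- rewrite !length_app, repeat_length. lia.
- revert l Hl. induction cs as [| c cs IH]; intros [| e l] Hl; simpl in *; try discriminate.
  + symmetry. apply lincomb_repeat0.
  + f_equal. apply IH. lia.
Qed.

Lemma in_span_In l v : (forall e, add (scal 1 e) zero = e) ->
  In v l -> in_span zero add scal l v.
Proof.
intros add_scal1 Hin. destruct (in_split v l Hin) as [l1 [l2 ->]].
apply in_span_app_l. exists (1 :: repeat 0 (length l2)). simpl. split.
- rewrite repeat_length. reflexivity.
- rewrite lincomb_repeat0. symmetry. apply add_scal1.
Qed.

Lemma in_span_flat_map (A : Type) (f : A -> list V) (L : list A) x v :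
  In x L -> in_span zero add scal (f x) v -> in_span zero add scal (flat_map f L) v.
Proof.
intros Hin Hs. destruct (in_split x L Hin) as [l1 [l2 ->]].
rewrite flat_map_app. simpl. apply in_span_app_l, in_span_app_r, Hs.
Qed.

End Spans.

Section OperatorSums.
Variables X Y : Banach.

Fixpoint op_sum (es : list (X -> Y)) (c : nat -> R) : X -> Y :=
  match es with
  | nil => op_zero X Y
  | T :: es' => op_add X Y (op_scal X Y (c O) T) (op_sum es' (fun i => c (S i)))
  end.

Fixpoint coef_list {A : Type} (es : list A) (c : nat -> R) : list R :=
  match es with nil => nil | _ :: es' => c O :: coef_list es' (fun i => c (S i)) end.

Definition coef_opnorm (es : list (X -> Y)) (c : nat -> R) : R := opnorm X Y (op_sum es c).

Lemma op_sum_blop es c : Forall (is_blop X Y) es -> is_blop X Y (op_sum es c).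
Proof.
intro H. revert c. induction H as [| T es HT _ IH]; intro c; simpl.
- apply blop_zero.
- apply blop_add; [apply blop_scal, HT | apply IH].
Qed.

Lemma op_sum_add es c d x :
  op_sum es (fun i => c i + d i) x = badd Y (op_sum es c x) (op_sum es d x).
Proof.
revert c d. induction es as [| T es IH]; intros c d; simpl; unfold op_zero, op_add, op_scal.
- rewrite badd_0. reflexivity.
- rewrite IH, bscal_addl. apply badd_ACA.
Qed.

Lemma op_sum_scal es a c x : op_sum es (fun i => a * c i) x = bscal Y a (op_sum es c x).
Proof.
revert c. induction es as [| T es IH]; intro c; simpl; unfold op_zero, op_add, op_scal.
- rewrite bscal_0r. reflexivity.
- rewrite IH, bscal_addr, bscal_mul. reflexivity.
Qed.

Lemma op_sum_ext es c d x : (forall i, (i < length es)%nat -> c i = d i) ->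
  op_sum es c x = op_sum es d x.
Proof.
revert c d. induction es as [| T es IH]; intros c d Hcd; simpl; [reflexivity |].
unfold op_add, op_scal. rewrite (Hcd O) by (simpl; lia). f_equal.
apply IH. intros i Hi. apply Hcd. simpl; lia.
Qed.

Lemma lincomb_op_sum cs es : length cs = length es ->
  lincomb (op_zero X Y) (op_add X Y) (op_scal X Y) cs es = op_sum es (fun i => nth i cs 0).
Proof.
revert es. induction cs as [| a cs IH]; intros [| T es] Hl; simpl in *; try discriminate;
  [reflexivity |].
rewrite IH by lia. reflexivity.
Qed.

Lemma op_sum_in_span es c u :
  in_span (bzero Y) (badd Y) (bscal Y) (map (fun T => T u) es) (op_sum es c u).
Proof.
exists (coef_list es c). split.
- revert c. induction es as [| T es IH]; intro c; simpl; [reflexivity | f_equal; apply IH].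
- revert c. induction es as [| T es IH]; intro c; simpl; [reflexivity |].
  unfold op_add, op_scal. rewrite IH. reflexivity.
Qed.

Lemma coef_opnorm_seminorm es : Forall (is_blop X Y) es -> coef_seminorm (coef_opnorm es).
Proof.
intro Hb. split; unfold coef_opnorm.
- intros c d. rewrite (opnorm_ext X Y _ (op_add X Y (op_sum es c) (op_sum es d)))
    by apply op_sum_add.
  apply opnorm_triangle; apply op_sum_blop, Hb.
- intros a c. rewrite (opnorm_ext X Y _ (op_scal X Y a (op_sum es c))) by apply op_sum_scal.
  apply opnorm_scal, op_sum_blop, Hb.
Qed.

Lemma coef_opnorm_depends es : depends_on_first (length es) (coef_opnorm es).
Proof. intros c d Hcd. apply opnorm_ext. intro x. apply op_sum_ext, Hcd. Qed.

End OperatorSums.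

(** * The octahedral direction *)

Lemma blop_rank_one (X Y : Banach) (f : X -> R) (y : Y) :
  is_blfun X f -> is_blop X Y (fun x => bscal Y (f x) y).
Proof.
intros [fa [fs [M HM]]]. split; [| split].
- intros x x'. rewrite fa. apply bscal_addl.
- intros a x. rewrite fs, bscal_mul. reflexivity.
- exists (M * bnorm Y y). intro x. rewrite bnorm_scal.
  assert (H := HM x). assert (0 <= bnorm Y y) by apply bnorm_ge0. nra.
Qed.

(* Hahn-Banach for the seminorm [x |-> ||S x||] at a nearly norming point of [S]. *)
Lemma norming_functional (X Y : Banach) (S : X -> Y) a : is_blop X Y S -> 0 < a ->
  exists phi : X -> R, is_blfun X phi /\ (forall x, Rabs (phi x) <= bnorm Y (S x)) /\
    dualnorm X phi <= opnorm X Y S /\ opnorm X Y S - a <= dualnorm X phi.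
Proof.
intros HS Ha.
destruct (opnorm_approx X Y S a HS Ha) as [x0 [Hx0 Hx0']].
assert (Hp : is_seminorm X (fun x => bnorm Y (S x))).
{ split; [| apply blop_abs_homogeneous, HS].
  intros x y. destruct HS as [Sa _]. rewrite Sa. apply bnorm_triangle. }
destruct (hahn_banach X _ Hp x0) as [phi [phi_add [phi_hom [phi_le phi_x0]]]].
assert (Habs : forall x, Rabs (phi x) <= bnorm Y (S x)).
{ intro x. unfold Rabs. destruct Rcase_abs; [| apply phi_le].
  assert (H := phi_le (bscal X (-1) x)). rewrite phi_hom, (proj2 Hp), Rabs_m1 in H. lra. }
assert (Hphi : is_blfun X phi).
{ split; [| split]; [exact phi_add | exact phi_hom |].
  exists (opnorm X Y S). intro x. apply (Rle_trans _ _ _ (Habs x)), opnorm_scale, HS. }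
exists phi. split; [| split; [| split]]; [exact Hphi | exact Habs | |].
- apply dualnorm_le. intros x Hx. apply (Rle_trans _ _ _ (Habs x)), opnorm_ub; assumption.
- apply (Rle_trans _ (Rabs (phi x0))); [| apply dualnorm_ub; assumption].
  rewrite phi_x0, Rabs_right by apply Rle_ge, bnorm_ge0. lra.
Qed.

Lemma norming_family (X Y : Banach) (es : list (X -> Y)) a :
  Forall (is_blop X Y) es -> 0 < a ->
  exists phi : (nat -> R) -> X -> R, forall d,
    is_blfun X (phi d) /\ (forall x, Rabs (phi d x) <= bnorm Y (op_sum X Y es d x)) /\
    dualnorm X (phi d) <= coef_opnorm X Y es d /\ coef_opnorm X Y es d - a <= dualnorm X (phi d).
Proof.
intros Hb Ha.
exact (choice _ (fun d => norming_functional X Y _ a (op_sum_blop X Y es d Hb) Ha)).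
Qed.

Lemma nearly_norming_points (X : Banach) (I : Type) (g : I -> X -> R) eta :
  (forall i, is_blfun X (g i)) -> 0 < eta ->
  exists u : I -> X, forall i, bnorm X (u i) <= 1 /\ dualnorm X (g i) - eta < Rabs (g i (u i)).
Proof. intros Hg Heta. exact (choice _ (fun i => dualnorm_approx X (g i) eta (Hg i) Heta)). Qed.

Lemma dual_octahedral_family (X : Banach) (fs : list (X -> R)) eps :
  dual_octahedral X -> Forall (is_blfun X) fs -> 0 < eps ->
  exists xs, is_blfun X xs /\ dualnorm X xs = 1 /\ forall f, In f fs ->
    (1 - eps) * (dualnorm X f + 1) <= dualnorm X (fun z => f z + 1 * xs z).
Proof.
intros HX Hfs Heps. destruct (HX fs Hfs eps Heps) as [xs [Hxs [Hnorm Hoct]]].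
exists xs. split; [exact Hxs | split; [exact Hnorm |]]. intros f Hf.
rewrite <- Rabs_R1 at 2. apply Rge_le, Hoct.
apply in_span_In; [| | exact Hf]; intros; apply functional_extensionality; intro; ring.
Qed.

Lemma octahedral_points (X Y : Banach) (es : list (X -> Y)) (pts : list X) eps :
  octahedral Y -> 0 < eps ->
  exists y, bnorm Y y = 1 /\ forall u c mu, In u pts ->
    (1 - eps) * (bnorm Y (op_sum X Y es c u) + Rabs mu)
      <= bnorm Y (badd Y (op_sum X Y es c u) (bscal Y mu y)).
Proof.
intros HY Heps.
destruct (HY (flat_map (fun u => map (fun T => T u) es) pts)) with (eps := eps)
  as [y [_ [Hnorm Hoct]]]; [apply Forall_forall; auto | exact Heps |].
exists y. split; [exact Hnorm |]. intros u c mu Hu. apply Rge_le, Hoct.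
apply (in_span_flat_map _ _ _ _ (fun e x => eq_ind_r (fun v => badd Y v x = x)
  (badd_0l Y x) (bscal_0l Y e)) _ _ _ u); [exact Hu | apply op_sum_in_span].
Qed.

Lemma abs_sum_near_max (p q P a : R) : 0 < a <= 1 / 8 ->
  Rabs p <= P -> Rabs q <= 1 -> 1 - 2 * a <= P <= 1 + a ->
  (1 - a) * (P + 1) - a < Rabs (p + q) -> 1 - 4 * a <= Rabs q /\ 1 - 6 * a <= Rabs p.
Proof.
intros Ha Hp Hq HP Hpq. assert (H := Rabs_triang p q). split; nra.
Qed.

Lemma opnorm_add_scal_lower (X Y : Banach) (S T : X -> Y) e :
  is_blop X Y S -> is_blop X Y T -> opnorm X Y T = 1 -> 0 <= e <= 1 ->
  (0 < opnorm X Y S -> forall mu, (1 - e) * (1 + Rabs mu)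
     <= opnorm X Y (op_add X Y (op_scal X Y (/ opnorm X Y S) S) (op_scal X Y mu T))) ->
  forall lam, (1 - e) * (opnorm X Y S + Rabs lam) <= opnorm X Y (op_add X Y S (op_scal X Y lam T)).
Proof.
intros HS HT HT1 He Hunit lam.
assert (Hlam : 0 <= Rabs lam) by apply Rabs_pos.
destruct (opnorm_ge0 X Y S HS) as [Hs | Hs0].
- set (s := opnorm X Y S) in *.
  rewrite (opnorm_ext X Y _ (op_scal X Y s
             (op_add X Y (op_scal X Y (/ s) S) (op_scal X Y (lam / s) T)))).
  + rewrite opnorm_scal by (apply blop_add; apply blop_scal; assumption).
    rewrite (Rabs_right s) by lra.
    specialize (Hunit Hs (lam / s)).
    unfold Rdiv in Hunit. rewrite Rabs_mult, Rabs_inv, (Rabs_right s) in Hunit by lra.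
    replace ((1 - e) * (s + Rabs lam)) with (s * ((1 - e) * (1 + Rabs lam * / s)))
      by (field; lra).
    apply Rmult_le_compat_l; lra.
  + intro x. unfold op_add, op_scal. rewrite bscal_addr, !bscal_mul.
    replace (s * / s) with 1 by (field; lra). replace (s * (lam / s)) with lam by (field; lra).
    rewrite bscal_1. reflexivity.
- assert (Htri := opnorm_triangle X Y _ _ (blop_add X Y _ _ HS (blop_scal X Y lam T HT))
                    (blop_scal X Y (-1) S HS)).
  rewrite (opnorm_ext X Y (op_add X Y _ _) (op_scal X Y lam T)), !opnorm_scal, Rabs_m1, HT1,
    <- Hs0 in Htri by (assumption || (intro x; unfold op_add, op_scal;
      rewrite (badd_comm Y (S x)), <- badd_assoc, badd_scal_m1, badd_0; reflexivity)).
  rewrite <- Hs0. nra.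
Qed.

Section OctahedralWitness.
Variables (X Y : Banach) (es : list (X -> Y)) (a : R).
Hypothesis es_bounded : Forall (is_blop X Y) es.
Hypothesis a_small : 0 < a <= 1 / 8.
Let N := coef_opnorm X Y es.
Let N_seminorm : coef_seminorm N := coef_opnorm_seminorm X Y es es_bounded.
Variables (L : list (nat -> R)) (phi : (nat -> R) -> X -> R) (xs : X -> R)
  (u : (nat -> R) -> X) (y : Y).
Hypothesis L_net : forall c, N c <= 1 -> exists d, In d L /\ N (fun i => c i - d i) <= a.
Hypothesis phi_norming : forall d,
  is_blfun X (phi d) /\ (forall x, Rabs (phi d x) <= bnorm Y (op_sum X Y es d x)) /\
  dualnorm X (phi d) <= N d /\ N d - a <= dualnorm X (phi d).
Hypothesis xs_blfun : is_blfun X xs.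
Hypothesis xs_unit : dualnorm X xs = 1.
Hypothesis xs_octahedral : forall d, In d L ->
  (1 - a) * (dualnorm X (phi d) + 1) <= dualnorm X (fun z => phi d z + 1 * xs z).
Hypothesis u_norming : forall d, bnorm X (u d) <= 1 /\
  dualnorm X (fun z => phi d z + 1 * xs z) - a < Rabs (phi d (u d) + 1 * xs (u d)).
Hypothesis y_unit : bnorm Y y = 1.
Hypothesis y_octahedral : forall d c mu, In d L ->
  (1 - a) * (bnorm Y (op_sum X Y es c (u d)) + Rabs mu)
    <= bnorm Y (badd Y (op_sum X Y es c (u d)) (bscal Y mu y)).

Let T0 := fun x => bscal Y (xs x) y.

(* Approximate [c] by a net point [d]; at the point [u d], where [phi d + xs] nearly
   attains its norm, both [S_c] and [xs] are nearly of norm one, and the octahedrality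
   of [Y] at [S_c (u d)] does the rest. *)
Lemma witness_unit_coef c mu : N c = 1 ->
  (1 - 8 * a) * (1 + Rabs mu) <= opnorm X Y (op_add X Y (op_sum X Y es c) (op_scal X Y mu T0)).
Proof.
intro Hc.
destruct (L_net c ltac:(lra)) as [d [HdL Hcd]].
destruct (coef_seminorm_near N N_seminorm c d a Hcd) as [Hd1 Hd2].
destruct (phi_norming d) as [Hphi [Hphi_abs [Hphi_le Hphi_ge]]].
destruct (u_norming d) as [Hu Hu_approx].
assert (Hxs_oct := xs_octahedral d HdL).
destruct (abs_sum_near_max (phi d (u d)) (xs (u d)) (dualnorm X (phi d)) a a_small)
  as [Hxs_u Hphi_u].
- apply dualnorm_ub; assumption.
- rewrite <- xs_unit. apply dualnorm_ub; assumption.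
- lra.
- rewrite Rmult_1_l in Hu_approx. lra.
- assert (HSd : 1 - 6 * a <= bnorm Y (op_sum X Y es d (u d)))
    by apply (Rle_trans _ _ _ Hphi_u), Hphi_abs.
  assert (Hdiff : bnorm Y (op_sum X Y es (fun i => c i - d i) (u d)) <= a).
  { apply (Rle_trans _ _ _ (opnorm_scale X Y _ (u d) (op_sum_blop X Y es _ es_bounded))).
    fold (coef_opnorm X Y es (fun i => c i - d i)). fold N.
    assert (0 <= N (fun i => c i - d i)) by apply (coef_seminorm_ge0 N N_seminorm).
    assert (0 <= bnorm X (u d)) by apply bnorm_ge0. nra. }
  assert (HSc : 1 - 7 * a <= bnorm Y (op_sum X Y es c (u d))).
  { assert (E : op_sum X Y es d (u d) = badd Y (op_sum X Y es c (u d))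
                  (bscal Y (-1) (op_sum X Y es (fun i => c i - d i) (u d)))).
    { rewrite <- op_sum_scal, <- op_sum_add. apply op_sum_ext. intros; ring. }
    assert (H := bnorm_triangle Y (op_sum X Y es c (u d))
                   (bscal Y (-1) (op_sum X Y es (fun i => c i - d i) (u d)))).
    rewrite <- E, bnorm_scal_m1 in H. lra. }
  apply (Rle_trans _ (bnorm Y (op_add X Y (op_sum X Y es c) (op_scal X Y mu T0) (u d)))).
  2:{ apply opnorm_ub; [| exact Hu].
      apply blop_add; [apply op_sum_blop, es_bounded | apply blop_scal, blop_rank_one, xs_blfun]. }
  unfold op_add, op_scal, T0. rewrite bscal_mul.
  refine (Rle_trans _ _ _ _ (y_octahedral d c (mu * xs (u d)) HdL)).
  rewrite Rabs_mult.
  assert (Hmu : 0 <= Rabs mu) by apply Rabs_pos.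
  assert (Rabs mu * (1 - 4 * a) <= Rabs mu * Rabs (xs (u d))) by (apply Rmult_le_compat_l; lra).
  nra.
Qed.

Lemma witness_octahedral e c lam : 1 - e <= 1 - 8 * a ->
  (1 - e) * (N c + Rabs lam)
    <= opnorm X Y (op_add X Y (op_sum X Y es c) (op_scal X Y lam T0)).
Proof.
intro He. apply (Rle_trans _ ((1 - 8 * a) * (N c + Rabs lam))).
{ apply Rmult_le_compat_r; [| exact He].
  assert (0 <= N c) by apply (coef_seminorm_ge0 N N_seminorm).
  assert (0 <= Rabs lam) by apply Rabs_pos. lra. }
apply opnorm_add_scal_lower.
- apply op_sum_blop, es_bounded.
- apply blop_rank_one, xs_blfun.
- unfold T0. rewrite opnorm_rank_one_unit; assumption.
- lra.
- intros Hpos mu. set (s := opnorm X Y (op_sum X Y es c)) in *.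
  rewrite (opnorm_ext X Y _ (op_add X Y (op_sum X Y es (fun i => / s * c i)) (op_scal X Y mu T0)))
    by (intro x; unfold op_add, op_scal; rewrite op_sum_scal; reflexivity).
  apply witness_unit_coef.
  rewrite (proj2 N_seminorm), Rabs_right.
  + change (N c) with s. field. lra.
  + left. apply Rinv_0_lt_compat, Hpos.
Qed.

End OctahedralWitness.

Theorem mainTheorem8 (X Y : Banach) (H : (X -> Y) -> Prop) :
  dual_octahedral X -> octahedral Y ->
  closed_subspace_L X Y H -> contains_finite_rank X Y H ->
  octahedral_opspace X Y H.
Proof.
intros HX HY [H_bounded _] H_rank_one es Hes eps Heps.
assert (Hb : Forall (is_blop X Y) es) by exact (Forall_impl _ H_bounded Hes).
set (a := Rmin eps 1 / 8).
assert (Ha : 0 < a <= 1 / 8 /\ 1 - eps <= 1 - 8 * a).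
{ unfold a. assert (0 < Rmin eps 1 <= 1) by (split; [apply Rmin_glb_lt | apply Rmin_r]; lra).
  assert (Rmin eps 1 <= eps) by apply Rmin_l. lra. }
destruct (coef_seminorm_finite_nets (length es) _ (coef_opnorm_seminorm X Y es Hb)
  (coef_opnorm_depends X Y es) 1 a ltac:(lra)) as [L HL].
destruct (norming_family X Y es a Hb ltac:(lra)) as [phi Hphi].
destruct (dual_octahedral_family X (map phi L) a HX) as [xs [Hxs [Hxs1 Hxs_oct]]];
  [apply Forall_forall; intros f [d [<- _]]%in_map_iff; apply Hphi | lra |].
destruct (nearly_norming_points X _ (fun d z => phi d z + 1 * xs z) a) as [u Hu];
  [intro d; apply blfun_add_scal; [apply Hphi | exact Hxs] | lra |].
destruct (octahedral_points X Y es (map u L) a HY ltac:(lra)) as [y [Hy1 Hy_oct]].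
exists (fun x => bscal Y (xs x) y). split; [| split].
- apply H_rank_one, Hxs.
- rewrite opnorm_rank_one_unit; assumption.
- intros S lam [cs [Hcs ->]]. rewrite lincomb_op_sum by exact Hcs.
  apply Rle_ge, (witness_octahedral X Y es a Hb (proj1 Ha) L phi xs u y);
    try assumption.
  + intros d HdL. apply Hxs_oct, in_map, HdL.
  + intros d c mu HdL. apply Hy_oct, in_map, HdL.
  + apply Ha.
Qed.
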